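(* Let $C\ge 4$. There is a constant $K\ge1$ depending only on $C$ such that for every integer $N\ge 3$ and every $C$-uniformly convex sequence $\{a_n\}_{n=1}^N$, there exists a $C^2$ function $f$ on $[\frac1N,1]$ with $f(\frac nN)=a_n$ for $1\le n\le N$ and $K^{-1}\le f'(x)\le K$, $K^{-1}\le f''(x)\le K$ for all $x$ in its domain.
   Context: A real sequence $\{a_n\}_{n=1}^N$ is called $C$-uniformly convex if for all admissible $n$: $a_{n+1}-a_n\in[\frac{1}{CN},\frac{C}{N}]$ and $(a_{n+2}-a_{n+1})-(a_{n+1}-a_n)\in[\frac{1}{CN^2},\frac{C}{N^2}]$ (for $C=4$ this is the paper's notion of a uniformly convex sequence with parameter $N$). *)

From Stdlib Require Import Reals Lra Lia.
From Coquelicot Require Import Coquelicot.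
Open Scope R_scope.

Definition uniformly_convex (C : R) (N : nat) (a : nat -> R) : Prop :=
  (forall n : nat, (1 <= n)%nat -> (n + 1 <= N)%nat ->
      1 / (C * INR N) <= a (S n) - a n <= C / INR N) /\
  (forall n : nat, (1 <= n)%nat -> (n + 2 <= N)%nat ->
      1 / (C * INR N ^ 2) <= (a (S (S n)) - a (S n)) - (a (S n) - a n)
                          <= C / INR N ^ 2).

(* Cut [1/N, 1] into the cells [n/N, (n+1)/N] with local variable t = N x - n in [0, 1].
   On cell n take f = a_n + S_n t / N + Phi_n(t) / N^2, where S_n is a discrete slope at n/N
   and Phi_n'' = mu + alpha t (1-t)^k + beta t^k (1-t), mu = 1/(2C), Phi_n(0) = Phi_n'(0) = 0.
   As f'' = mu at every node, the pieces join in C^2 once Phi_n(1) and Phi_n'(1) take the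
   values forced by a_(n+1) and S_(n+1): a 2x2 linear system in (alpha, beta) whose right
   hand sides are halves of the normalised second differences N^2 (a_(m+2) - 2 a_(m+1) + a_m),
   hence in [1/(2C), C/2].  For k >= 4 C^2 the two bumps are lopsided enough for alpha and
   beta to be nonnegative and O(k^3 C), so mu <= f'' <= mu + O(k^3 C); and f', being
   increasing, stays between S_1 >= 1/(2C) and S_N <= 2C. *)

From Stdlib Require Import Reals Lra Lia ZArith.
From Coquelicot Require Import Coquelicot.
Open Scope R_scope.

Lemma is_derive_glue (F P Q : R -> R) (c l d : R) : 0 < d ->
  (forall y, c - d < y < c -> F y = P y) -> (forall y, c <= y < c + d -> F y = Q y) ->
  P c = Q c -> is_derive P c l -> is_derive Q c l -> is_derive F c l.
Proof.
  intros Hd HP HQ Hc DP DQ.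
  apply is_derive_Reals in DP, DQ. apply is_derive_Reals. intros eps Heps.
  destruct (DP eps Heps) as [[d1 Hd1] H1], (DQ eps Heps) as [[second_diff Hsecond] H2]; simpl in *.
  assert (Hm : 0 < Rmin d (Rmin d1 second_diff)) by (repeat apply Rmin_pos; assumption).
  exists (mkposreal _ Hm). intros h Hh Hlt; simpl in Hlt.
  pose proof (Rmin_l d (Rmin d1 second_diff)). pose proof (Rmin_r d (Rmin d1 second_diff)).
  pose proof (Rmin_l d1 second_diff). pose proof (Rmin_r d1 second_diff).
  rewrite (HQ c) by lra.
  destruct (Rlt_or_le h 0) as [Hneg | Hpos].
  - rewrite Rabs_left in Hlt by lra.
    rewrite HP, <- Hc by lra. apply H1; [exact Hh | rewrite Rabs_left; lra].
  - rewrite Rabs_right in Hlt by lra.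
    rewrite HQ by lra. apply H2; [exact Hh | rewrite Rabs_right; lra].
Qed.

Lemma continuous_glue (F P Q : R -> R) (c d : R) : 0 < d ->
  (forall y, c - d < y < c -> F y = P y) -> (forall y, c <= y < c + d -> F y = Q y) ->
  P c = Q c -> continuous P c -> continuous Q c -> continuous F c.
Proof.
  intros Hd HP HQ Hc CP CQ.
  apply continuity_pt_filterlim in CP, CQ. apply continuity_pt_filterlim.
  intros eps Heps.
  destruct (CP eps Heps) as [d1 [Hd1 H1]], (CQ eps Heps) as [second_diff [Hsecond H2]].
  simpl in H1, H2; unfold R_dist in H1, H2.
  exists (Rmin d (Rmin d1 second_diff)). split; [repeat apply Rmin_pos; assumption|].
  pose proof (Rmin_l d (Rmin d1 second_diff)). pose proof (Rmin_r d (Rmin d1 second_diff)).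
  pose proof (Rmin_l d1 second_diff). pose proof (Rmin_r d1 second_diff).
  intros y [Hcy Hy]; simpl in *; unfold R_dist in *.
  rewrite (HQ c) by lra.
  destruct (Rlt_or_le y c) as [Hlt | Hge].
  - rewrite Rabs_left in Hy by lra.
    rewrite HP, <- Hc by lra. apply H1. split; [exact Hcy | rewrite Rabs_left; lra].
  - rewrite Rabs_right in Hy by lra.
    rewrite HQ by lra. apply H2. split; [exact Hcy | rewrite Rabs_right; lra].
Qed.

Lemma nondecreasing_of_derive_nonneg (f f' : R -> R) (lo hi : R) :
  (forall y, lo <= y <= hi -> is_derive f y (f' y)) ->
  (forall y, lo <= y <= hi -> 0 <= f' y) ->
  forall u v, lo <= u <= v -> v <= hi -> f u <= f v.
Proof.
  intros Hf Hf' u v Huv Hv.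
  destruct (MVT_gen f u v f') as (c & Hc & Hmvt);
    rewrite ?Rmin_left, ?Rmax_right in * by lra.
  - intros y Hy. apply Hf. lra.
  - intros y Hy. apply continuity_pt_filterlim, (@ex_derive_continuous R_AbsRing R_NormedModule).
    exists (f' y). apply Hf. lra.
  - pose proof (Hf' c ltac:(lra)). nra.
Qed.

Definition natfloor (y : R) : nat := Z.to_nat (Zfloor y).

Lemma natfloor_eq m y : INR m <= y < INR m + 1 -> natfloor y = m.
Proof.
  intros Hy. unfold natfloor.
  rewrite (Zfloor_eq (Z.of_nat m)); [apply Nat2Z.id | now rewrite <- INR_IZR_INZ].
Qed.

Lemma natfloor_bound y : 0 <= y -> INR (natfloor y) <= y < INR (natfloor y) + 1.
Proof.
  intros Hy. pose proof (Zfloor_bound y) as Hb.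
  assert (Hz : (0 <= Zfloor y)%Z) by (apply le_IZR; apply Zfloor_lub in Hy; apply IZR_le; lia).
  unfold natfloor. rewrite INR_IZR_INZ, Z2Nat.id by exact Hz. exact Hb.
Qed.

(* [cell N x = n] when [n/N <= x < (n+1)/N], except that [x = 1] is put in the last cell [N - 1]. *)
Definition cell (N : nat) (x : R) : nat := Nat.min (N - 1) (natfloor (x * INR N)).

Lemma cell_node N j : (0 < N)%nat -> cell N (INR j / INR N) = Nat.min (N - 1) j.
Proof.
  intros HN. pose proof (lt_0_INR N HN). unfold cell.
  rewrite (natfloor_eq j); [reflexivity|].
  replace (INR j / INR N * INR N) with (INR j) by (field; lra). lra.
Qed.

Lemma cell_bounds N x : (2 <= N)%nat -> 1 / INR N <= x <= 1 ->
  (1 <= cell N x <= N - 1)%nat /\ 0 <= x * INR N - INR (cell N x) <= 1.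
Proof.
  intros HN Hx. assert (H2 := le_INR 2 N HN). simpl in H2.
  assert (Hs : 1 <= x * INR N <= INR N).
  { destruct Hx as [Hx1 Hx2]. apply (Rle_div_l 1 x (INR N)) in Hx1; nra. }
  destruct (natfloor_bound (x * INR N)) as [Hm1 Hm2]; [lra|].
  unfold cell. set (m := natfloor (x * INR N)) in *.
  assert (Hm : (0 < m <= N)%nat) by (split; [apply INR_lt | apply INR_le]; simpl; lra).
  destruct (Nat.eq_dec m N) as [HmN | HmN].
  - rewrite HmN, Nat.min_l by lia. rewrite minus_INR by lia. rewrite HmN in Hm1.
    simpl. split; [lia | lra].
  - rewrite Nat.min_r by lia. split; [lia | lra].
Qed.

Lemma cell_local N x : (0 < N)%nat -> 1 / INR N <= x ->
  exists d, 0 < d /\ exists i j : nat,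
    (forall y, x - d < y < x -> cell N y = i) /\
    (forall y, x <= y < x + d -> cell N y = j) /\
    (i = j \/ S i = j /\ x = INR j / INR N).
Proof.
  intros HN Hx. pose proof (lt_0_INR N HN) as HNpos.
  assert (Hs : 1 <= x * INR N) by (apply (Rle_div_l 1 x (INR N)) in Hx; lra).
  assert (Hnear : forall e y, x - e / INR N < y < x + e / INR N ->
                    x * INR N - e < y * INR N < x * INR N + e).
  { intros e y Hy. assert (e / INR N * INR N = e) by (field; lra). split; nra. }
  destruct (natfloor_bound (x * INR N)) as [Hm1 Hm2]; [lra|].
  set (m := natfloor (x * INR N)) in *.
  assert (Hm : (0 < m)%nat) by (apply INR_lt; simpl; lra).
  destruct (Rle_lt_or_eq_dec _ _ Hm1) as [Hlt | Heq].
  - set (e := Rmin (x * INR N - INR m) (INR m + 1 - x * INR N)).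
    assert (He : 0 < e) by (apply Rmin_pos; lra).
    assert (e <= x * INR N - INR m) by apply Rmin_l.
    assert (e <= INR m + 1 - x * INR N) by apply Rmin_r.
    assert (Hconst : forall y, x - e / INR N < y < x + e / INR N -> cell N y = cell N x).
    { intros y Hy. unfold cell. fold m. f_equal.
      apply natfloor_eq. pose proof (Hnear e y Hy). lra. }
    exists (e / INR N). split; [apply Rdiv_lt_0_compat; lra|].
    exists (cell N x), (cell N x). split; [|split; [|now left]]; intros y Hy; apply Hconst; lra.
  - exists (1 / INR N). split; [apply Rdiv_lt_0_compat; lra|].
    exists (Nat.min (N - 1) (m - 1)), (Nat.min (N - 1) m). split; [|split].
    + intros y Hy. unfold cell. f_equal. apply natfloor_eq.
      pose proof (Hnear 1 y ltac:(lra)). rewrite minus_INR by lia. simpl. nra.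
    + intros y Hy. unfold cell. f_equal. apply natfloor_eq.
      pose proof (Hnear 1 y ltac:(lra)). nra.
    + destruct (Nat.le_gt_cases N m); [left; lia | right].
      split; [lia|]. rewrite Nat.min_r by lia. rewrite Heq. field. lra.
Qed.

Section Glue.

Variables (N : nat) (P : nat -> R -> R).
Hypothesis N_pos : (0 < N)%nat.
Hypothesis P_match : forall n, P n (INR (S n) / INR N) = P (S n) (INR (S n) / INR N).

Lemma glued_continuous : (forall n y, continuous (P n) y) ->
  forall x, 1 / INR N <= x -> continuous (fun y => P (cell N y) y) x.
Proof.
  intros HC x Hx.
  destruct (cell_local N x N_pos Hx) as (d & Hd & i & j & Hl & Hr & Hij).
  apply (continuous_glue _ (P i) (P j) x d Hd).
  - intros y Hy. now rewrite (Hl y Hy).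
  - intros y Hy. now rewrite (Hr y Hy).
  - destruct Hij as [<- | [<- ->]]; [reflexivity | apply P_match].
  - apply HC.
  - apply HC.
Qed.

Lemma glued_is_derive (Q : nat -> R -> R) : (forall n y, is_derive (P n) y (Q n y)) ->
  (forall n, Q n (INR (S n) / INR N) = Q (S n) (INR (S n) / INR N)) ->
  forall x, 1 / INR N <= x -> is_derive (fun y => P (cell N y) y) x (Q (cell N x) x).
Proof.
  intros HD Q_match x Hx.
  destruct (cell_local N x N_pos Hx) as (d & Hd & i & j & Hl & Hr & Hij).
  rewrite (Hr x) by lra.
  apply (is_derive_glue _ (P i) (P j) x _ d Hd).
  - intros y Hy. now rewrite (Hl y Hy).
  - intros y Hy. now rewrite (Hr y Hy).
  - destruct Hij as [<- | [<- ->]]; [reflexivity | apply P_match].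
  - destruct Hij as [<- | [<- ->]]; [apply HD | rewrite <- Q_match; apply HD].
  - apply HD.
Qed.

End Glue.

Definition lbump (k : nat) (t : R) : R := t * (1 - t) ^ k.
Definition rbump (k : nat) (t : R) : R := t ^ k * (1 - t).
Definition lbump_prim (k : nat) (t : R) : R :=
  1 / ((INR k + 1) * (INR k + 2)) - (1 - t) ^ S k / (INR k + 1) + (1 - t) ^ S (S k) / (INR k + 2).
Definition lbump_prim2 (k : nat) (t : R) : R :=
  (t - 1) / ((INR k + 1) * (INR k + 2)) + 1 / ((INR k + 2) * (INR k + 3))
  + (1 - t) ^ S (S k) / ((INR k + 1) * (INR k + 2))
  - (1 - t) ^ S (S (S k)) / ((INR k + 2) * (INR k + 3)).
Definition rbump_prim (k : nat) (t : R) : R :=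
  t ^ S k / (INR k + 1) - t ^ S (S k) / (INR k + 2).
Definition rbump_prim2 (k : nat) (t : R) : R :=
  t ^ S (S k) / ((INR k + 1) * (INR k + 2)) - t ^ S (S (S k)) / ((INR k + 2) * (INR k + 3)).

(* [auto_derive] unfolds [INR (S k)] into a match on [k] and writes [1 - t] as [1 + - t];
   undo both so that [field] sees the powers [(1 - t) ^ k] as one atom. *)
Ltac bump_derive k :=
  auto_derive; [ auto
  | repeat match goal with
      |- context [match ?k with 0%nat => 1 | S _ => INR ?k + 1 end] =>
        change (match k with 0%nat => 1 | S _ => INR k + 1 end) with (INR (S k))
    end;
    rewrite ?S_INR; try match goal with |- context [1 + - ?t] => replace (1 + - t) with (1 - t) by ring end;
    pose proof (pos_INR k); simpl; field; lra ].

Lemma bumps_at0 k : (1 <= k)%nat ->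
  lbump k 0 = 0 /\ rbump k 0 = 0 /\ lbump_prim k 0 = 0 /\ rbump_prim k 0 = 0 /\
  lbump_prim2 k 0 = 0 /\ rbump_prim2 k 0 = 0.
Proof.
  intros Hk. pose proof (pos_INR k).
  unfold lbump, rbump, lbump_prim, rbump_prim, lbump_prim2, rbump_prim2.
  rewrite Rminus_0_r, !pow1, !pow_i by lia. repeat split; field; lra.
Qed.

Lemma bumps_at1 k : (1 <= k)%nat ->
  lbump k 1 = 0 /\ rbump k 1 = 0 /\
  lbump_prim k 1 = 1 / ((INR k + 1) * (INR k + 2)) /\
  rbump_prim k 1 = 1 / ((INR k + 1) * (INR k + 2)) /\
  lbump_prim2 k 1 = 1 / ((INR k + 2) * (INR k + 3)) /\
  rbump_prim2 k 1 = 2 / ((INR k + 1) * (INR k + 2) * (INR k + 3)).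
Proof.
  intros Hk. pose proof (pos_INR k).
  unfold lbump, rbump, lbump_prim, rbump_prim, lbump_prim2, rbump_prim2.
  rewrite Rminus_diag, !pow1, !pow_i by lia. repeat split; field; lra.
Qed.

Lemma pow_unit_interval x m : 0 <= x <= 1 -> 0 <= x ^ m <= 1.
Proof.
  intros Hx. split; [now apply pow_le|].
  rewrite <- (pow1 m). now apply pow_incr.
Qed.

Lemma bumps_unit_interval k t : 0 <= t <= 1 ->
  0 <= lbump k t <= 1 /\ 0 <= rbump k t <= 1.
Proof.
  intros Ht. unfold lbump, rbump.
  pose proof (pow_unit_interval (1 - t) k ltac:(lra)).
  pose proof (pow_unit_interval t k Ht).
  split; split; nra.
Qed.

Definition bump_denom (k : nat) : R := (INR k + 1) * (INR k + 2) * (INR k + 3).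

(* [(bump_coef k mu A B, bump_coef k mu B A)] is the solution [(x, y)] of
   [(k+1) x + 2 y = bump_denom k (A - mu/2)] and [2 x + (k+1) y = bump_denom k (B - mu/2)],
   which are the conditions [profile 1 = A] and [profile' 1 = A + B] below. *)
Definition bump_coef (k : nat) (mu X Y : R) : R :=
  bump_denom k * ((INR k + 1) * (X - mu / 2) - 2 * (Y - mu / 2)) / ((INR k - 1) * (INR k + 3)).

Lemma bump_denom_pos k : 0 < bump_denom k.
Proof. unfold bump_denom. pose proof (pos_INR k). repeat apply Rmult_lt_0_compat; lra. Qed.

Lemma bump_coef_bounds k mu M X Y : 0 < mu -> mu <= X <= M -> mu <= Y <= M ->
  4 * M <= (INR k + 1) * mu -> 0 <= bump_coef k mu X Y <= bump_denom k * M.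
Proof.
  intros Hmu HX HY Hk.
  assert (Hk3 : 3 <= INR k) by nra.
  set (D := (INR k - 1) * (INR k + 3)).
  set (num := (INR k + 1) * (X - mu / 2) - 2 * (Y - mu / 2)).
  assert (HD : 0 < D) by (unfold D; nra).
  assert (Hnum : 0 <= num <= D * M).
  { unfold num, D. split; nra. }
  pose proof (bump_denom_pos k).
  unfold bump_coef; fold D num. split.
  - apply Rdiv_le_0_compat; [nra | exact HD].
  - apply Rle_div_l; [exact HD|]. nra.
Qed.

Section Profile.

Variables (k : nat) (mu A B : R).

Definition profile (t : R) : R :=
  mu * t ^ 2 / 2 + bump_coef k mu A B * lbump_prim2 k t + bump_coef k mu B A * rbump_prim2 k t.
Definition profile' (t : R) : R :=
  mu * t + bump_coef k mu A B * lbump_prim k t + bump_coef k mu B A * rbump_prim k t.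
Definition profile'' (t : R) : R :=
  mu + bump_coef k mu A B * lbump k t + bump_coef k mu B A * rbump k t.

Lemma profile_derive t : is_derive profile t (profile' t).
Proof.
  unfold profile, profile', lbump_prim2, rbump_prim2, lbump_prim, rbump_prim.
  bump_derive k.
Qed.

Lemma profile'_derive t : is_derive profile' t (profile'' t).
Proof.
  unfold profile', profile'', lbump_prim, rbump_prim, lbump, rbump.
  bump_derive k.
Qed.

Lemma profile''_continuous t : continuous profile'' t.
Proof.
  apply (@ex_derive_continuous R_AbsRing R_NormedModule).
  unfold profile'', lbump, rbump. auto_derive. auto.
Qed.

Lemma profile_at0 : (1 <= k)%nat -> profile 0 = 0 /\ profile' 0 = 0 /\ profile'' 0 = mu.
Proof.
  intros Hk. unfold profile, profile', profile''.
  destruct (bumps_at0 k Hk) as (-> & -> & -> & -> & -> & ->).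
  repeat split; field.
Qed.

Lemma profile_at1 : (2 <= k)%nat -> profile 1 = A /\ profile' 1 = A + B /\ profile'' 1 = mu.
Proof.
  intros Hk. assert (H2 := le_INR 2 k Hk). simpl in H2.
  unfold profile, profile', profile'', bump_coef, bump_denom.
  destruct (bumps_at1 k ltac:(lia)) as (-> & -> & -> & -> & -> & ->).
  repeat split; field; lra.
Qed.

Lemma profile''_bounds M t : 0 < mu -> mu <= A <= M -> mu <= B <= M ->
  4 * M <= (INR k + 1) * mu -> 0 <= t <= 1 -> mu <= profile'' t <= mu + 2 * bump_denom k * M.
Proof.
  intros Hmu HA HB Hk Ht. unfold profile''.
  pose proof (bump_coef_bounds k mu M A B Hmu HA HB Hk).
  pose proof (bump_coef_bounds k mu M B A Hmu HB HA Hk).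
  pose proof (bumps_unit_interval k t Ht).
  split; nra.
Qed.

End Profile.

Section Interpolation.

Variables (N : nat) (a : nat -> R) (C : R).
Hypothesis N_ge3 : (3 <= N)%nat.
Hypothesis a_convex : uniformly_convex C N a.

Lemma INR_N_ge3 : 3 <= INR N.
Proof. apply (le_INR 3) in N_ge3. simpl in N_ge3. lra. Qed.

(* Interior slopes are central differences; the end slopes are chosen so that
   [gap_left 1 = 1 / C] and [gap_right (N - 1) = second_diff (N - 2) / 2]. *)
Definition slope (n : nat) : R :=
  if (n <=? 1)%nat then INR N * (a 2%nat - a 1%nat) - 1 / (C * INR N)
  else if (n <? N)%nat then INR N * (a (S n) - a (n - 1)%nat) / 2
  else INR N * (a N - a (N - 1)%nat) + INR N * (a N - 2 * a (N - 1)%nat + a (N - 2)%nat) / 2.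

Definition second_diff (m : nat) : R := INR N ^ 2 * (a (S (S m)) - 2 * a (S m) + a m).

(* On cell [n], the profile must satisfy [profile 1 = gap_left n] and
   [profile' 1 = gap_left n + gap_right n] for the piece to end at [a (S n)] with slope [slope (S n)]. *)
Definition gap_left (n : nat) : R := INR N ^ 2 * (a (S n) - a n) - INR N * slope n.
Definition gap_right (n : nat) : R := INR N * (slope (S n) - slope n) - gap_left n.

Lemma slope_mid n : (2 <= n)%nat -> (n < N)%nat ->
  slope n = INR N * (a (S n) - a (n - 1)%nat) / 2.
Proof.
  intros H2 HN. unfold slope.
  destruct (Nat.leb_spec n 1); [lia|]. now destruct (Nat.ltb_spec n N); [|lia].
Qed.

Lemma slope_last : (2 <= N)%nat -> slope N =
  INR N * (a N - a (N - 1)%nat) + INR N * (a N - 2 * a (N - 1)%nat + a (N - 2)%nat) / 2.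
Proof.
  intros HN. unfold slope.
  destruct (Nat.leb_spec N 1); [lia|]. now destruct (Nat.ltb_spec N N); [lia|].
Qed.

Lemma second_diff_bounds m : 0 < C -> (1 <= m)%nat -> (m + 2 <= N)%nat -> 1 / C <= second_diff m <= C.
Proof.
  intros HC Hm1 Hm2. pose proof INR_N_ge3.
  destruct (proj2 a_convex m Hm1 Hm2) as [L U].
  assert (HN2 : 0 < INR N ^ 2) by nra.
  apply (Rmult_le_compat_l (INR N ^ 2)) in L, U; try lra.
  replace (INR N ^ 2 * (1 / (C * INR N ^ 2))) with (1 / C) in L by (field; lra).
  replace (INR N ^ 2 * (C / INR N ^ 2)) with C in U by (field; lra).
  unfold second_diff. lra.
Qed.

Lemma gap_left_first : 0 < C -> gap_left 1 = 1 / C.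
Proof.
  intros HC. pose proof INR_N_ge3.
  unfold gap_left, slope; simpl (1 <=? 1)%nat; cbv iota. field. lra.
Qed.

Lemma gap_left_mid m : (1 <= m)%nat -> (S m < N)%nat -> gap_left (S m) = second_diff m / 2.
Proof.
  intros Hm HmN. unfold gap_left, second_diff. rewrite slope_mid by lia.
  replace (S m - 1)%nat with m by lia. field.
Qed.

Lemma gap_right_mid n : (1 <= n)%nat -> (n + 2 <= N)%nat -> gap_right n = second_diff n / 2.
Proof.
  intros Hn HnN. unfold gap_right, gap_left, second_diff. rewrite (slope_mid (S n)) by lia.
  replace (S n - 1)%nat with n by lia. field.
Qed.

Lemma gap_right_last m : S (S m) = N -> gap_right (S m) = second_diff m / 2.
Proof.
  intros Hm. unfold gap_right, gap_left, second_diff. rewrite Hm, slope_last by lia.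
  replace (N - 1)%nat with (S m) by lia. replace (N - 2)%nat with m by lia.
  field.
Qed.

Lemma gaps_bounds n : 2 <= C -> (1 <= n <= N - 1)%nat ->
  1 / (2 * C) <= gap_left n <= C / 2 /\ 1 / (2 * C) <= gap_right n <= C / 2.
Proof.
  intros HC Hn.
  assert (Hsecond : forall m, (1 <= m)%nat -> (m + 2 <= N)%nat ->
                  1 / (2 * C) <= second_diff m / 2 <= C / 2).
  { intros m Hm1 Hm2. pose proof (second_diff_bounds m ltac:(lra) Hm1 Hm2).
    replace (1 / (2 * C)) with (1 / C / 2) by (field; lra). lra. }
  split.
  - destruct n as [|[|m]]; [lia| |].
    + rewrite gap_left_first by lra. split.
      * apply Rle_div_l; [lra|]. replace (1 / C * (2 * C)) with 2 by (field; lra). lra.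
      * apply Rle_div_l; [lra|]. replace (C / 2 * C) with (C * C / 2) by field. nra.
    + rewrite gap_left_mid by lia. apply Hsecond; lia.
  - destruct (Nat.eq_dec (S n) N) as [Hlast | Hmid].
    + destruct n as [|m]; [lia|]. rewrite gap_right_last by exact Hlast. apply Hsecond; lia.
    + rewrite gap_right_mid by lia. apply Hsecond; lia.
Qed.

Lemma slope_first_lower : 0 < C -> 1 / (2 * C) <= slope 1.
Proof.
  intros HC. pose proof INR_N_ge3.
  destruct (proj1 a_convex 1%nat ltac:(lia) ltac:(lia)) as [L _].
  apply (Rmult_le_compat_l (INR N)) in L; [|lra].
  replace (INR N * (1 / (C * INR N))) with (1 / C) in L by (field; lra).
  assert (1 / (C * INR N) <= 1 / (3 * C)).
  { unfold Rdiv. rewrite !Rmult_1_l. apply Rinv_le_contravar; nra. }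
  unfold slope; simpl (1 <=? 1)%nat; cbv iota.
  assert (1 / (2 * C) + 1 / (3 * C) <= 1 / C).
  { replace (1 / (2 * C) + 1 / (3 * C)) with (5 / 6 * (1 / C)) by (field; lra).
    assert (0 < 1 / C) by (apply Rdiv_lt_0_compat; lra). lra. }
  lra.
Qed.

Lemma slope_last_upper : 0 < C -> slope N <= 2 * C.
Proof.
  intros HC. pose proof INR_N_ge3. rewrite slope_last by lia.
  destruct (proj1 a_convex (N - 1)%nat ltac:(lia) ltac:(lia)) as [_ U1].
  replace (S (N - 1)) with N in U1 by lia.
  pose proof (second_diff_bounds (N - 2) HC ltac:(lia) ltac:(lia)) as [_ U2].
  unfold second_diff in U2. replace (S (S (N - 2))) with N in U2 by lia.
  replace (S (N - 2)) with (N - 1)%nat in U2 by lia.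
  apply (Rmult_le_compat_l (INR N)) in U1; [|lra].
  replace (INR N * (C / INR N)) with C in U1 by (field; lra).
  replace (INR N * (a N - 2 * a (N - 1)%nat + a (N - 2)%nat) / 2)
    with (INR N ^ 2 * (a N - 2 * a (N - 1)%nat + a (N - 2)%nat) / (2 * INR N)) by (field; lra).
  assert (INR N ^ 2 * (a N - 2 * a (N - 1)%nat + a (N - 2)%nat) / (2 * INR N) <= C).
  { apply Rle_div_l; nra. }
  lra.
Qed.

Variable k : nat.

Definition mu : R := 1 / (2 * C).
Definition cell_time (n : nat) (x : R) : R := x * INR N - INR n.

Definition piece (n : nat) (x : R) : R :=
  a n + slope n * cell_time n x / INR N
  + profile k mu (gap_left n) (gap_right n) (cell_time n x) / INR N ^ 2.
Definition piece' (n : nat) (x : R) : R :=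
  slope n + profile' k mu (gap_left n) (gap_right n) (cell_time n x) / INR N.
Definition piece'' (n : nat) (x : R) : R :=
  profile'' k mu (gap_left n) (gap_right n) (cell_time n x).

Lemma cell_time_derive n x : is_derive (cell_time n) x (INR N).
Proof. unfold cell_time. auto_derive; [auto | ring]. Qed.

Lemma piece_derive n x : is_derive (piece n) x (piece' n x).
Proof.
  pose proof INR_N_ge3. unfold piece, piece', cell_time.
  set (A := gap_left n). set (B := gap_right n).
  auto_derive.
  - eexists. apply profile_derive.
  - rewrite (is_derive_unique _ _ _ (profile_derive k mu A B _)).
    replace (x * INR N + - INR n) with (x * INR N - INR n) by ring. field. lra.
Qed.

Lemma piece'_derive n x : is_derive (piece' n) x (piece'' n x).
Proof.
  pose proof INR_N_ge3. unfold piece', piece'', cell_time.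
  set (A := gap_left n). set (B := gap_right n).
  auto_derive.
  - eexists. apply profile'_derive.
  - rewrite (is_derive_unique _ _ _ (profile'_derive k mu A B _)).
    replace (x * INR N + - INR n) with (x * INR N - INR n) by ring. field. lra.
Qed.

Lemma piece''_continuous n x : continuous (piece'' n) x.
Proof.
  apply (continuous_comp (cell_time n) (profile'' k mu (gap_left n) (gap_right n))).
  - apply (@ex_derive_continuous R_AbsRing R_NormedModule). eexists. apply cell_time_derive.
  - apply profile''_continuous.
Qed.

Lemma pieces_at_left_node n : (1 <= k)%nat ->
  piece n (INR n / INR N) = a n /\ piece' n (INR n / INR N) = slope n /\
  piece'' n (INR n / INR N) = mu.
Proof.
  intros Hk. pose proof INR_N_ge3.
  assert (Ht : cell_time n (INR n / INR N) = 0) by (unfold cell_time; field; lra).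
  unfold piece, piece', piece''. rewrite Ht.
  destruct (profile_at0 k mu (gap_left n) (gap_right n) Hk) as (-> & -> & ->).
  repeat split; field; lra.
Qed.

Lemma pieces_at_right_node n : (2 <= k)%nat ->
  piece n (INR (S n) / INR N) = a (S n) /\ piece' n (INR (S n) / INR N) = slope (S n) /\
  piece'' n (INR (S n) / INR N) = mu.
Proof.
  intros Hk. pose proof INR_N_ge3.
  assert (Ht : cell_time n (INR (S n) / INR N) = 1)
    by (unfold cell_time; rewrite S_INR; field; lra).
  unfold piece, piece', piece''. rewrite Ht.
  destruct (profile_at1 k mu (gap_left n) (gap_right n) Hk) as (-> & -> & ->).
  unfold gap_right, gap_left. repeat split; field; lra.
Qed.

Definition interp (x : R) : R := piece (cell N x) x.
Definition interp' (x : R) : R := piece' (cell N x) x.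
Definition interp'' (x : R) : R := piece'' (cell N x) x.

Hypothesis k_ge2 : (2 <= k)%nat.

Lemma pieces_match n :
  piece n (INR (S n) / INR N) = piece (S n) (INR (S n) / INR N) /\
  piece' n (INR (S n) / INR N) = piece' (S n) (INR (S n) / INR N) /\
  piece'' n (INR (S n) / INR N) = piece'' (S n) (INR (S n) / INR N).
Proof.
  destruct (pieces_at_right_node n k_ge2) as (-> & -> & ->).
  destruct (pieces_at_left_node (S n) ltac:(lia)) as (-> & -> & ->).
  auto.
Qed.

Lemma interp_derives x : 1 / INR N <= x ->
  is_derive interp x (interp' x) /\ is_derive interp' x (interp'' x) /\ continuous interp'' x.
Proof.
  intros Hx. assert (HN : (0 < N)%nat) by lia.
  split; [|split].
  - apply (glued_is_derive N piece HN); try exact Hx; try exact piece_derive;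
      intros n; now destruct (pieces_match n) as (? & ? & ?).
  - apply (glued_is_derive N piece' HN); try exact Hx; try exact piece'_derive;
      intros n; now destruct (pieces_match n) as (? & ? & ?).
  - apply (glued_continuous N piece'' HN); try exact Hx; try exact piece''_continuous;
      intros n; now destruct (pieces_match n) as (? & ? & ?).
Qed.

Lemma interp_at_node j : (1 <= j <= N)%nat ->
  interp (INR j / INR N) = a j /\ interp' (INR j / INR N) = slope j.
Proof.
  intros Hj. unfold interp, interp'. rewrite cell_node by lia.
  destruct (Nat.eq_dec j N) as [-> | HjN].
  - replace (Nat.min (N - 1) N) with (N - 1)%nat by lia.
    destruct (pieces_at_right_node (N - 1) k_ge2) as (Hval & Hslope & _).
    replace (S (N - 1)) with N in Hval, Hslope by lia.
    now rewrite Hval, Hslope.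
  - replace (Nat.min (N - 1) j) with j by lia.
    now destruct (pieces_at_left_node j ltac:(lia)) as (-> & -> & _).
Qed.

Hypothesis C_ge2 : 2 <= C.
Hypothesis k_large : 4 * C ^ 2 <= INR k + 1.

Lemma interp''_bounds x : 1 / INR N <= x <= 1 -> mu <= interp'' x <= mu + bump_denom k * C.
Proof.
  intros Hx. destruct (cell_bounds N x ltac:(lia) Hx) as [Hn Ht].
  destruct (gaps_bounds (cell N x) C_ge2 Hn) as [HA HB].
  unfold interp'', piece''.
  replace (bump_denom k * C) with (2 * bump_denom k * (C / 2)) by field.
  apply profile''_bounds; try assumption.
  - unfold mu. apply Rdiv_lt_0_compat; lra.
  - unfold mu. replace ((INR k + 1) * (1 / (2 * C))) with ((INR k + 1) / (2 * C)) by (field; lra).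
    apply (Rle_div_r (4 * (C / 2)) (INR k + 1) (2 * C)); [lra | nra].
Qed.

Lemma interp'_bounds x : 1 / INR N <= x <= 1 -> slope 1 <= interp' x <= slope N.
Proof.
  intros Hx. pose proof INR_N_ge3.
  assert (Hmono := nondecreasing_of_derive_nonneg interp' interp'' (1 / INR N) 1).
  assert (Hpos : 0 < mu) by (unfold mu; apply Rdiv_lt_0_compat; lra).
  destruct (interp_at_node 1 ltac:(lia)) as [_ Hfirst].
  destruct (interp_at_node N ltac:(lia)) as [_ Hlast].
  change (INR 1) with 1 in Hfirst. rewrite Rdiv_diag in Hlast by lra.
  rewrite <- Hfirst, <- Hlast.
  split; apply Hmono; try lra; intros y Hy.
  all: first [apply interp_derives; lra | pose proof (interp''_bounds y Hy); lra].
Qed.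

End Interpolation.

Theorem corollary1 :
  forall C : R, 4 <= C ->
  exists K : R, 1 <= K /\
    forall (N : nat) (a : nat -> R),
      (3 <= N)%nat ->
      uniformly_convex C N a ->
      exists f f1 f2 : R -> R,
        (forall x, 1 / INR N <= x <= 1 ->
           is_derive f x (f1 x) /\ is_derive f1 x (f2 x) /\ continuous f2 x) /\
        (forall n : nat, (1 <= n)%nat -> (n <= N)%nat -> f (INR n / INR N) = a n) /\
        (forall x, 1 / INR N <= x <= 1 ->
           / K <= f1 x <= K /\ / K <= f2 x <= K).
Proof.
  intros C HC.
  destruct (INR_unbounded (4 * C ^ 2)) as [k Hk].
  assert (Hk2 : (2 <= k)%nat) by (apply INR_le; simpl; nra).
  pose proof (bump_denom_pos k).
  exists ((bump_denom k + 2) * C). split; [nra|].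
  intros N a HN Ha.
  exists (interp N a C k), (interp' N a C k), (interp'' N a C k).
  split; [|split].
  - intros x Hx. apply interp_derives; auto. lra.
  - intros n Hn1 HnN. apply interp_at_node; auto.
  - intros x Hx.
    destruct (interp''_bounds N a C HN Ha k Hk2 ltac:(lra) ltac:(lra) x Hx) as [L2 U2].
    destruct (interp'_bounds N a C HN Ha k Hk2 ltac:(lra) ltac:(lra) x Hx) as [L1 U1].
    pose proof (slope_first_lower N a C HN Ha ltac:(lra)).
    pose proof (slope_last_upper N a C HN Ha ltac:(lra)).
    assert (Hinv : / ((bump_denom k + 2) * C) <= mu C).
    { unfold mu, Rdiv. rewrite Rmult_1_l. apply Rinv_le_contravar; nra. }
    assert (mu C <= 1) by (unfold mu; apply Rle_div_l; lra).
    unfold mu in *. split; split; nra.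
Qed.
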